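(* Let $A$ be a complete Boolean algebra, $Z$ an open dense subset of $\mathrm{Ult}(A)$, and $p:Z\to Y$ a perfect irreducible continuous surjection onto a locally compact Hausdorff space $Y$. Define $a\,C_p\,b$ iff $p(\varepsilon_A(a)\cap Z)\cap p(\varepsilon_A(b)\cap Z)\neq\emptyset$ ($a,b\in A$), and $\mathbb B_p=\{a\in A\mid \varepsilon_A(a)\cap Z\text{ is compact}\}$. Then $(A,C_p,\mathbb B_p)$ is a complete local contact algebra, and the map $a\mapsto p(\varepsilon_A(a)\cap Z)$ is a $\mathbf{CLCA}$-isomorphism $(A,C_p,\mathbb B_p)\to(\mathrm{RC}(Y),C_Y,\mathrm{CR}(Y))$, i.e. a Boolean isomorphism onto $\mathrm{RC}(Y)$ which preserves and reflects contact and maps $\mathbb B_p$ onto $\mathrm{CR}(Y)$. Moreover, $\mathbb B_p=\{a\in A\mid\varepsilon_A(a)\subseteq Z\}$.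
   Context: $\mathrm{Ult}(A)$ is the Stone space of ultrafilters of $A$ with basic clopen sets $\varepsilon_A(a)=\{\mathfrak u\mid a\in\mathfrak u\}$. A contact algebra is a Boolean algebra with a relation $C$ such that $a\,C\,a$ for $a>0$; $a\,C\,b$ implies $a,b>0$; $C$ is symmetric; $a\,C\,(b\vee c)$ iff $a\,C\,b$ or $a\,C\,c$; $a\ll b$ iff not $a\,C\,b^*$. A (complete) local contact algebra $(A,C,\mathbb B)$ is a (complete) contact algebra with an ideal $\mathbb B$ satisfying (BC1) $a\ll c$, $a\in\mathbb B$ imply $a\ll b\ll c$ for some $b\in\mathbb B$; (BC2) $a\,C\,b$ implies $a\,C\,(c\wedge b)$ for some $c\in\mathbb B$; (BC3) each $a\ne0$ has $0\ne b\in\mathbb B$ with $b\ll a$. For a locally compact Hausdorff $Y$, $\mathrm{RC}(Y)$ is the complete Boolean algebra of regular closed sets, $F\,C_Y\,G$ iff $F\cap G\ne\emptyset$, and $\mathrm{CR}(Y)$ is the ideal of compact regular closed sets; $(\mathrm{RC}(Y),C_Y,\mathrm{CR}(Y))$ is a complete local contact algebra. Since $Z$ is extremally disconnected, $\varepsilon_A(a)\cap Z$ is clopen and $H\mapsto p(H)$ is a Boolean isomorphism from the clopen (= regular closed) sets of $Z$ onto $\mathrm{RC}(Y)$ (Alexandroff's theorem). *)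

From HB Require Import structures.
From mathcomp Require Import all_boot all_order.
From mathcomp Require Import boolp classical_sets topology.
Set Implicit Arguments. Unset Strict Implicit. Unset Printing Implicit Defensive.
Import Order.TTheory.
Local Open Scope classical_set_scope.

(* Boolean algebras are ctbDistrLatticeType's (complemented distributive
   lattices with top and bottom). *)
Section BA.
Context {d : Order.disp_t} (A : ctbDistrLatticeType d).

Definition ba_le (a b : A) : Prop := (Order.le a b : bool).

Definition complete_BA : Prop :=
  forall S : set A, exists s : A,
    (forall x, S x -> ba_le x s) /\
    (forall t, (forall x, S x -> ba_le x t) -> ba_le s t).

Definition proper_filter (u : set A) : Prop :=
  [/\ u Order.top, ~ u Order.bottom,
      (forall a b, u a -> ba_le a b -> u b) &
      (forall a b, u a -> u b -> u (Order.meet a b))].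

Definition ultrafilter (u : set A) : Prop :=
  proper_filter u /\ (forall v, proper_filter v -> u `<=` v -> v = u).

Definition contact (C : A -> A -> Prop) : Prop :=
  [/\ (forall a, a != Order.bottom -> C a a),
      (forall a b, C a b -> a != Order.bottom /\ b != Order.bottom),
      (forall a b, C a b -> C b a) &
      (forall a b c, C a (Order.join b c) <-> C a b \/ C a c)].

Definition ll (C : A -> A -> Prop) (a b : A) : Prop := ~ C a (Order.compl b).

Definition ideal (B : set A) : Prop :=
  [/\ B Order.bottom,
      (forall a b, B b -> ba_le a b -> B a) &
      (forall a b, B a -> B b -> B (Order.join a b))].

Definition local_contact_algebra (C : A -> A -> Prop) (B : set A) : Prop :=
  [/\ contact C, ideal B,
      (forall a c, B a -> ll C a c -> exists2 b, B b & ll C a b /\ ll C b c),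
      (forall a b, C a b -> exists2 c, B c & C a (Order.meet c b)) &
      (forall a, a != Order.bottom ->
         exists2 b, B b & b != Order.bottom /\ ll C b a)].

Definition complete_local_contact_algebra (C : A -> A -> Prop) (B : set A)
  : Prop := complete_BA /\ local_contact_algebra C B.
End BA.

Definition ult {d : Order.disp_t} (A : ctbDistrLatticeType d) :=
  {u : set A | ultrafilter u}.

HB.instance Definition _ d (A : ctbDistrLatticeType d) := gen_eqMixin (ult A).
HB.instance Definition _ d (A : ctbDistrLatticeType d) :=
  gen_choiceMixin (ult A).

Section StoneTop.
Context {d : Order.disp_t} (A : ctbDistrLatticeType d).

Definition epsA (a : A) : set (ult A) := fun u => proj1_sig u a.

Let base (o : option A) : set (ult A) := epsA (odflt Order.top o).

Let base_cover : \bigcup_(i in [set: option A]) base i = setT.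
Proof.
apply/seteqP; split => // u _; exists None => //.
by rewrite /base /epsA /=; case: (proj2_sig u) => [[]].
Qed.

Let base_join : forall i j t, [set: option A] i -> [set: option A] j ->
  base i t -> base j t ->
  exists k, [/\ [set: option A] k, base k t & base k `<=` base i `&` base j].
Proof.
move=> i j t _ _ hi hj.
exists (Some (Order.meet (odflt Order.top i) (odflt Order.top j))); split => //.
  by rewrite /base /epsA /=; case: (proj2_sig t) => [[_ _ _ +] _]; apply.
move=> u; rewrite /base /epsA /= => hu.
case: (proj2_sig u) => [[_ _ up _] _]; split; apply: (up _ _ hu);
  rewrite /ba_le; [exact: leIl | exact: leIr].
Qed.

HB.instance Definition _ := isBaseTopological.Build (ult A) base_cover base_join.
End StoneTop.

Section Top.
Context {X Y : topologicalType}.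

Definition closed_in (Z F : set X) : Prop :=
  exists2 G, closed G & F = Z `&` G.

Definition perfect_on (Z : set X) (p : X -> Y) : Prop :=
  [/\ {within Z, continuous p},
      (forall F, closed_in Z F -> closed (p @` F)) &
      (forall y, compact (Z `&` p @^-1` [set y]))].

Definition irreducible_on (Z : set X) (p : X -> Y) : Prop :=
  forall F, closed_in Z F -> p @` F = setT -> F = Z.
End Top.

Section RC.
Context {Y : topologicalType}.
Definition regular_closed (F : set Y) : Prop := closure (interior F) = F.

Definition rc_meet (F G : set Y) : set Y := closure (interior (F `&` G)).
Definition rc_compl (F : set Y) : set Y := closure (~` F).
End RC.

Definition CLCA_iso_RC {d : Order.disp_t} {A : ctbDistrLatticeType d}
  {Y : topologicalType} (C : A -> A -> Prop) (B : set A) (phi : A -> set Y)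
  : Prop :=
  [/\
      [/\ (forall a, regular_closed (phi a)),
          injective phi &
          (forall F, regular_closed F -> exists a, phi a = F)],
      [/\ phi Order.bottom = set0, phi Order.top = setT,
          (forall a b, phi (Order.join a b) = phi a `|` phi b),
          (forall a b, phi (Order.meet a b) = rc_meet (phi a) (phi b)) &
          (forall a, phi (Order.compl a) = rc_compl (phi a))],
      (forall a b, C a b <-> phi a `&` phi b !=set0) &
      phi @` B = [set F | regular_closed F /\ compact F]].

From HB Require Import structures.
From mathcomp Require Import all_boot all_order.
From mathcomp Require Import boolp classical_sets topology.
Import Order.Theory.
Local Open Scope classical_set_scope.

(* Ult(A) is compact Hausdorff with the [epsA a] as its clopen sets, and
   completeness of A makes the closure of an open set clopen.  Irreducibility
   of the perfect map [p] says that every nonempty open subset [V] of [Z] has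
   a nonempty small image [~` p (Z `\` V)]; as the small image of [epsA a] is
   [~` phi (~` a)], an open subset of [phi a] that is dense in it, each [phi a]
   is regular closed, [phi (~` a)] is the closure of [~` phi a], and [phi]
   reflects the order.  A regular closed [F] is [phi s] for the clopen
   [epsA s] = closure of [Z `&` p @^-1` F°].  Since [Z] is dense, [epsA a `&` Z]
   is compact iff [epsA a `<=` Z], and BC1-BC3 follow by squeezing a clopen
   [epsA b] between a compact fibre or preimage and an open preimage. *)

Section Ultrafilters.
Context {d : Order.disp_t} {A : ctbDistrLatticeType d}.
Implicit Types (a b c : A) (u w : ult A) (v : set A).

Lemma ult_top u : epsA \top%O u.
Proof. by case: (svalP u) => -[]. Qed.

Lemma ult_bot u : ~ epsA \bot%O u.
Proof. by case: (svalP u) => -[]. Qed.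

Lemma ult_le {u a b} : epsA a u -> (a <= b)%O -> epsA b u.
Proof. by case: (svalP u) => -[_ _ + _] _; apply. Qed.

Lemma epsA_meet a b : epsA (a `&` b)%O = epsA a `&` epsA b.
Proof.
apply/seteqP; split=> u; last by case: (svalP u) => -[_ _ _ uI] _ [ua ub]; exact: uI.
by move=> uab; split; apply: ult_le uab _; [exact: leIl | exact: leIr].
Qed.

Lemma ult_maximal {u v} : proper_filter v -> sval u `<=` v -> v = sval u.
Proof. by case: (svalP u) => _; apply. Qed.

(* If [~` a] is not in [u], the filter generated by [u] and [a] is proper,
   so by maximality it is [u] itself. *)
Lemma ult_compl u a : epsA a u \/ epsA (~` a)%O u.
Proof.
have [|nua] := pselect (epsA a u); [by left | right].
apply: contrapT => nuca; apply: nua.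
pose v := [set x | exists2 w, epsA w u & (w `&` a <= x)%O].
have v_proper : proper_filter v.
  split.
  - by exists \top%O; [exact: ult_top | exact: lex1].
  - case=> w uw; rewrite lex0 disj_leC => wca; exact/nuca/(ult_le uw).
  - by move=> x y [w uw wx] xy; exists w => //; exact: le_trans xy.
  - move=> x y [w1 uw1 w1x] [w2 uw2 w2y]; exists (w1 `&` w2)%O.
      by rewrite epsA_meet.
    by rewrite lexI; apply/andP; split;
      [apply: le_trans w1x | apply: le_trans w2y]; rewrite leI2 ?leIl ?leIr.
have u_v : sval u `<=` v by move=> x ux; exists x => //; exact: leIl.
rewrite /epsA -(ult_maximal v_proper u_v).
by exists \top%O; [exact: ult_top | rewrite meet1x].
Qed.

Lemma epsA_compl a : epsA (~` a)%O = ~` epsA a.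
Proof.
apply/seteqP; split=> u; last by case: (ult_compl u a).
move=> uca ua; apply: (@ult_bot u).
by rewrite -(meetxC a) epsA_meet.
Qed.

Lemma epsA0 : epsA (\bot%O : A) = set0.
Proof. by apply/seteqP; split=> u // /ult_bot. Qed.

Lemma epsA1 : epsA (\top%O : A) = setT.
Proof. by apply/seteqP; split=> u // _; exact: ult_top. Qed.

Lemma epsA_join a b : epsA (a `|` b)%O = epsA a `|` epsA b.
Proof.
by rewrite -[(a `|` b)%O]complK complU epsA_compl epsA_meet !epsA_compl setCI !setCK.
Qed.

Lemma proper_filter_bigcup (F : set (set A)) :
  F !=set0 -> F `<=` @proper_filter _ A -> total_on F subset ->
  proper_filter (\bigcup_(X in F) X).
Proof.
move=> [X0 FX0] Fproper Ftotal.
have common x y : (\bigcup_(X in F) X) x -> (\bigcup_(X in F) X) y ->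
    exists2 X, F X & X x /\ X y.
  move=> [X FX Xx] [Y FY Yy].
  by case: (Ftotal X Y FX FY) => [/(_ x Xx) | /(_ y Yy)]; [exists Y | exists X].
split.
- by exists X0 => //; case: (Fproper X0 FX0).
- by case=> X FX; case: (Fproper X FX).
- move=> x y [X FX Xx] xy; exists X => //.
  by case: (Fproper X FX) => _ _ Xup _; exact: Xup xy.
- move=> x y ux uy; have [X FX [Xx Xy]] := common x y ux uy.
  by exists X => //; case: (Fproper X FX) => _ _ _ XI; exact: XI.
Qed.

(* Zorn's lemma is applied to the sets [X] such that [v `|` X] is a proper
   filter, so that the empty chain, with union [set0], needs no special case. *)
Lemma ultrafilter_extend {v} : proper_filter v -> exists u : ult A, v `<=` sval u.
Proof.
move=> v_proper.
pose P X := proper_filter (v `|` X).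
have [M [PM M_max]] : exists M, P M /\ forall X, M `<` X -> ~ P X.
  apply: Zorn_bigcup => F FP Ftotal; rewrite /P.
  pose G := [set W | W = v \/ exists2 X, F X & W = v `|` X].
  have -> : v `|` \bigcup_(X in F) X = \bigcup_(W in G) W.
    apply/seteqP; split=> x.
      case=> [vx | [X FX Xx]]; first by exists v => //; left.
      by exists (v `|` X); [right; exists X | right].
    by case=> W [-> | [X FX ->]] Wx //; [left | case: Wx; [left | right; exists X]].
  apply: proper_filter_bigcup; first by exists v; left.
    by move=> W [-> | [X FX ->]] //; exact: FP.
  move=> W1 W2 [-> | [X1 FX1 ->]] [-> | [X2 FX2 ->]].
  - by left.
  - by left; exact: subsetUl.
  - by right; exact: subsetUl.
  - by case: (Ftotal X1 X2 FX1 FX2) => ?; [left | right]; exact: setUS.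
have M_ult : ultrafilter (v `|` M).
  split=> // W W_proper vM_W; apply: contrapT => W_neq.
  have vW : v `<=` W := subset_trans (@subsetUl _ v M) vM_W.
  apply: (M_max W); last by rewrite /P (setUidr vW).
  split; first exact: subset_trans (@subsetUr _ v M) vM_W.
  by move=> WM; apply: W_neq; apply/seteqP; split=> // x /WM; right.
by exists (exist _ _ M_ult) => x vx; left.
Qed.

Lemma epsA_neq0 {a} : a != \bot%O -> epsA a !=set0.
Proof.
move=> a_neq0.
have up_proper : proper_filter [set x | (a <= x)%O].
  split=> /=.
  - exact: lex1.
  - by rewrite lex0; exact/negP.
  - by move=> x y ax xy; exact: le_trans xy.
  - by move=> x y ax ay; rewrite lexI ax ay.
by have [u au] := ultrafilter_extend up_proper; exists u; apply: au => /=.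
Qed.

Lemma subset_epsA a b : epsA a `<=` epsA b <-> (a <= b)%O.
Proof.
split=> [ab | ab u ua]; last exact: ult_le ua ab.
rewrite -[b]complK -disj_leC; apply: contrapT => /negP /epsA_neq0 [u].
by rewrite epsA_meet epsA_compl => -[/ab].
Qed.

Lemma epsA_inj : injective (@epsA d A).
Proof.
move=> a b eab; apply/eqP; rewrite eq_le.
by apply/andP; split; apply/subset_epsA; rewrite eab.
Qed.

End Ultrafilters.

Section StoneSpace.
Context {d : Order.disp_t} {A : ctbDistrLatticeType d}.
Implicit Types (a b c : A) (u w : ult A).

Lemma open_epsA a : open (epsA a).
Proof. by exists [set Some a] => //; rewrite bigcup_set1. Qed.

Lemma closed_epsA a : closed (epsA a).
Proof. by rewrite -[a]complK epsA_compl; apply: open_closedC; exact: open_epsA. Qed.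

Lemma nbhs_epsA {a u} : epsA a u -> nbhs u (epsA a).
Proof. by move=> ua; apply: open_nbhs_nbhs; split => //; exact: open_epsA. Qed.

Lemma nbhs_epsAP {u} {X : set (ult A)} :
  nbhs u X -> exists2 a, epsA a u & epsA a `<=` X.
Proof.
rewrite nbhsE => -[O [[I _ <-] [i Ii ui]] OX].
by exists (odflt \top%O i) => // w wi; apply: OX; exists i.
Qed.

Lemma ult_ext u w : sval u `<=` sval w -> u = w.
Proof.
move=> uw; move: (ult_maximal (proj1 (svalP w)) uw).
by case: u w {uw} => [U ?] [W ?] /= WU; apply: eq_exist.
Qed.

Lemma hausdorff_ult : hausdorff_space (ult A).
Proof.
move=> u w uw; apply: contrapT => u_neq_w.
have [c uc wc] : exists2 c, epsA c u & ~ epsA c w.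
  apply: contrapT => /forall2NP u_sub_w; apply/u_neq_w/ult_ext => c uc.
  by case: (u_sub_w c) => // /contrapT.
have wc' : epsA (~` c)%O w by rewrite epsA_compl.
have [v [vc vc']] := uw _ _ (nbhs_epsA uc) (nbhs_epsA wc').
by move: vc'; rewrite epsA_compl.
Qed.

Lemma compact_ult : compact [set: ult A].
Proof.
move=> F F_proper _.
pose v := [set a : A | F (epsA a)].
have v_proper : proper_filter v.
  split; rewrite /v /=.
  - by rewrite epsA1; exact: filterT.
  - by rewrite epsA0; exact: filter_not_empty.
  - by move=> a b Fa /subset_epsA ab; exact: filterS Fa.
  - by move=> a b Fa Fb; rewrite epsA_meet; exact: filterI.
have [w vw] := ultrafilter_extend v_proper.
exists w; split => // X N FX /nbhs_epsAP [c wc cN].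
apply: contrapT => /set0P/negP; rewrite negbK => /eqP XN.
suff /vw : v (~` c)%O by rewrite -/(epsA _ w) epsA_compl.
rewrite /v /= epsA_compl; apply: filterS FX => x Xx cx.
have XNx : (X `&` N) x by split => //; exact: cN.
by rewrite XN in XNx.
Qed.

Lemma compact_epsA a : compact (epsA a).
Proof. exact: subclosed_compact _ _ (closed_epsA a) compact_ult _. Qed.

Lemma epsA_between_compact_open {K V : set (ult A)} :
  compact K -> open V -> K `<=` V -> exists b, K `<=` epsA b /\ epsA b `<=` V.
Proof.
move=> cK oV KV; apply: contrapT => /forallNP no_b.
pose G := filter_from [set b | epsA b `<=` V] (fun b => K `&` epsA (~` b)%O).
have G_filter : Filter G.
  apply: filter_from_filter; first by exists \bot%O; rewrite /= epsA0.
  move=> b1 b2 b1V b2V; exists (b1 `|` b2)%O.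
    by rewrite /= epsA_join => x [/b1V | /b2V].
  by rewrite complU epsA_meet => x [Kx [? ?]].
have G_proper : ProperFilter G.
  apply: filter_from_proper => b bV.
  have /existsNP [x /not_implyP [Kx nbx]] : ~ K `<=` epsA b.
    by move=> Kb; exact: (no_b b (conj Kb bV)).
  by exists x; split => //; rewrite epsA_compl.
have [|x [Kx Gx]] := cK _ G_proper.
  by exists \bot%O; [rewrite /= epsA0 | move=> x []].
have [c xc cV] := nbhs_epsAP (open_nbhs_nbhs (conj oV (KV x Kx))).
have [y [[_ ync] yc]] := Gx _ _ (ex_intro2 _ _ c cV (fun y h => h)) (nbhs_epsA xc).
by move: ync; rewrite epsA_compl.
Qed.

(* In a complete Boolean algebra the closure of an open set of ultrafilters is
   clopen, its index being the supremum of the [a] with [epsA a] inside it. *)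
Lemma closure_open_epsA {S : set (ult A)} :
  complete_BA A -> open S -> exists s, closure S = epsA s.
Proof.
move=> A_complete oS.
have [s [s_ub s_lub]] := A_complete [set c | epsA c `<=` S].
exists s; apply/seteqP; split.
  apply: subset_trans (closed_epsA s); apply: closureS => x Sx.
  have [c xc cS] := nbhs_epsAP (open_nbhs_nbhs (conj oS Sx)).
  by move/subset_epsA: (s_ub c cS); apply.
move=> u us N /nbhs_epsAP [c uc cN].
apply: contrapT => /set0P/negP; rewrite negbK => /eqP SN.
suff /subset_epsA /(_ u us) : (s <= ~` c)%O by rewrite epsA_compl.
apply: s_lub => c' c'S; rewrite /ba_le -disj_leC; apply/eqP/epsA_inj.
rewrite epsA_meet epsA0; apply/seteqP; split=> // x [/c'S Sx cx].
by rewrite -SN; split => //; exact: cN.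
Qed.

Lemma epsA_sub_closureI {Z : set (ult A)} a : closure Z = setT ->
  epsA a `<=` closure (epsA a `&` Z).
Proof.
move=> Z_dense u ua B uB; have : closure Z u by rewrite Z_dense.
by move=> /(_ _ (filterI (nbhs_epsA ua) uB)) [z [Zz [az Bz]]]; exists z.
Qed.

Lemma compact_epsAI_dense {Z : set (ult A)} {a} : closure Z = setT ->
  compact (epsA a `&` Z) <-> epsA a `<=` Z.
Proof.
move=> Z_dense; split=> [/(compact_closed hausdorff_ult) cl | aZ]; last first.
  by rewrite setIidl //; exact: compact_epsA.
by move=> u /(epsA_sub_closureI a Z_dense) /cl [].
Qed.

End StoneSpace.

Lemma compact_cluster_closures {T : topologicalType} {C : set T}
    {F : set_system T} :
  Filter F -> compact C -> (forall X, F X -> closure X `&` C !=set0) ->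
  exists2 z, C z & cluster F z.
Proof.
move=> F_filter cC FC.
pose G := filter_from F (fun X => closure X `&` C).
have G_proper : ProperFilter G.
  apply: filter_from_proper; last exact: FC.
  apply: filter_from_filter; first by exists setT; exact: filterT.
  move=> X1 X2 FX1 FX2; exists (X1 `&` X2); first exact: filterI.
  by move=> x [/closureI [? ?] ?]; split; split.
have [|z [Cz Gz]] := cC _ G_proper.
  by exists setT; [exact: filterT | move=> x []].
exists z => //; rewrite clusterE => X FX; apply: closed_closure => B zB.
have [x [[Xx _] Bx]] : closure X `&` C `&` B !=set0 by apply: Gz => //; exists X.
by exists x.
Qed.

Section PerfectIrreducible.
Context {X Y : topologicalType} {Z : set X} {p : X -> Y}.
Hypotheses (oZ : open Z) (p_perfect : perfect_on Z p).
Hypotheses (p_irreducible : irreducible_on Z p) (p_onto : p @` Z = setT).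

Lemma continuous_in_Z : {in Z, continuous p}.
Proof. by rewrite -continuous_open_subspace //; case: p_perfect. Qed.

Lemma open_preimage {O : set Y} : open O -> open (Z `&` p @^-1` O).
Proof. by move: O; apply/continuous_inP => //; exact: continuous_in_Z. Qed.

Lemma closed_image {F : set X} : closed F -> closed (p @` (Z `&` F)).
Proof. by case: p_perfect => _ p_closed _ cF; apply: p_closed; exists F. Qed.

Lemma compact_fibre (y : Y) : compact (Z `&` p @^-1` [set y]).
Proof. by case: p_perfect. Qed.

Lemma fibre_neq0 (y : Y) : exists2 z, Z z & p z = y.
Proof.
have [z Zz <-] : (p @` Z) y by rewrite p_onto.
by exists z.
Qed.

Lemma closure_image_in {S : set X} {z} :
  Z z -> closure S z -> closure (p @` S) (p z).
Proof.
move=> Zz Sz B /(continuous_in_Z _ (mem_set Zz)) /Sz [x [Sx Bx]].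
by exists (p x); split => //; exists x.
Qed.

Lemma closure_meets_fibre {F : set_system X} {y : Y} :
  Filter F -> F Z -> cluster (p @ F) y ->
  forall W, F W -> closure W `&` (Z `&` p @^-1` [set y]) !=set0.
Proof.
move=> F_filter FZ Fy W FW.
apply: contrapT => /set0P/negP; rewrite negbK => /eqP W_y.
have y_out : ~ (p @` (Z `&` closure W)) y.
  case=> z [Zz Wz] zy; have : (closure W `&` (Z `&` p @^-1` [set y])) z by [].
  by rewrite W_y.
have FpW : F (p @^-1` (p @` (W `&` Z))).
  by apply: filterS (filterI FW FZ) => x Wx; exists x.
have oC : open (~` p @` (Z `&` closure W)).
  exact/closed_openC/closed_image/closed_closure.
have [_ [[w [Ww Zw] <-] w_out]] := Fy _ _ FpW (open_nbhs_nbhs (conj oC y_out)).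
by apply: w_out; exists w => //; split => //; exact: subset_closure.
Qed.

Lemma compact_preimage (K : set Y) : compact K -> compact (Z `&` p @^-1` K).
Proof.
move=> cK F F_proper FK.
have FZ : F Z by apply: filterS FK => x [].
have FpK : F (p @^-1` K) by apply: filterS FK => x [].
have [y [Ky Fy]] := cK _ (fmap_proper_filter p F_proper) FpK.
have [z [Zz zy] Fz] := compact_cluster_closures F_proper (compact_fibre y)
  (closure_meets_fibre F_proper FZ Fy).
by exists z; split => //; split => //; rewrite /preimage /= zy.
Qed.

Definition small_image (V : set X) : set Y := ~` (p @` (Z `\` V)).

Lemma small_imageS {V W : set X} : V `<=` W -> small_image V `<=` small_image W.
Proof. by move=> VW y Vy [z [Zz Wz] zy]; apply: Vy; exists z => //; split => // /VW. Qed.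

Lemma small_image_fibre {V : set X} {y z} : small_image V y -> Z z -> p z = y -> V z.
Proof. by move=> Vy Zz zy; apply: contrapT => Vz; apply: Vy; exists z. Qed.

Lemma small_image_neq0 {V : set X} : open V -> Z `&` V !=set0 -> small_image V !=set0.
Proof.
move=> oV [z [Zz Vz]]; apply/set0P/negP => /eqP V0.
have /p_irreducible ZV_Z : closed_in Z (Z `\` V).
  by exists (~` V); [exact: open_closedC | rewrite setDE].
have ZV_onto : p @` (Z `\` V) = setT by apply: setC_inj; rewrite setCT.
by have [] : (Z `\` V) z by rewrite ZV_Z.
Qed.

Lemma closure_small_image {V : set X} {z} : Z z -> open V -> V z ->
  closure (small_image V) (p z).
Proof.
move=> Zz oV Vz B; rewrite nbhsE => -[O [oO Oz] OB].
have oVO : open (V `&` (Z `&` p @^-1` O)).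
  by apply: openI => //; exact: open_preimage.
have [|y Vy] := small_image_neq0 oVO; first by exists z.
exists y; split; first exact: small_imageS Vy => x [].
have [z' Zz' z'y] := fibre_neq0 y.
by apply: OB; rewrite -z'y; have [_ [_]] := small_image_fibre Vy Zz' z'y.
Qed.

End PerfectIrreducible.
Arguments small_image {X Y} Z p V.

Section RegularClosedImages.
Context {d : Order.disp_t} {A : ctbDistrLatticeType d} {Y : topologicalType}.
Variables (Z : set (ult A)) (p : ult A -> Y).
Hypotheses (A_complete : complete_BA A).
Hypotheses (oZ : open Z) (Z_dense : closure Z = setT).
Hypotheses (p_perfect : perfect_on Z p) (p_irreducible : irreducible_on Z p).
Hypothesis (p_onto : p @` Z = setT).
Implicit Types a b c : A.

Local Notation phi a := (p @` (epsA a `&` Z)).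

Lemma closed_phi a : closed (phi a).
Proof. by rewrite setIC; exact: (closed_image p_perfect (closed_epsA a)). Qed.

Lemma phi0 : phi \bot%O = set0.
Proof. by rewrite epsA0 set0I image_set0. Qed.

Lemma phi1 : phi \top%O = setT.
Proof. by rewrite epsA1 setTI. Qed.

Lemma phi_join a b : phi (a `|` b)%O = phi a `|` phi b.
Proof. by rewrite epsA_join setIUl image_setU. Qed.

Lemma phi_mono {a b} : (a <= b)%O -> phi a `<=` phi b.
Proof. by move=> /subset_epsA ab; apply: image_subset; exact: setSI. Qed.

Lemma small_image_epsA a : small_image Z p (epsA a) = ~` phi (~` a)%O.
Proof. by rewrite /small_image epsA_compl setIC. Qed.

Lemma setC_phi_compl_sub a : ~` phi (~` a)%O `<=` phi a.
Proof.
move=> y nay; have : phi \top%O y by rewrite phi1.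
by rewrite -(joinxC a) phi_join => -[].
Qed.

Lemma setC_phi_compl_neq0 a : a != \bot%O -> ~` phi (~` a)%O !=set0.
Proof.
move=> a_neq0; rewrite -small_image_epsA.
apply: (small_image_neq0 p_irreducible (open_epsA a)).
have [u /(epsA_sub_closureI a Z_dense) /(_ _ filterT)] := epsA_neq0 a_neq0.
by case=> z [[az Zz] _]; exists z.
Qed.

Lemma phi_closureC a : phi a = closure (~` phi (~` a)%O).
Proof.
apply/seteqP; split.
  move=> _ [z [az Zz] <-]; rewrite -small_image_epsA.
  exact: (closure_small_image oZ p_perfect p_irreducible p_onto Zz (open_epsA a) az).
apply: subset_trans (closed_phi a); apply: closureS; exact: setC_phi_compl_sub.
Qed.

Lemma regular_closed_phi a : regular_closed (phi a).
Proof.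
apply/seteqP; split.
  by apply: subset_trans (closed_phi a); apply: closureS; exact: interior_subset.
rewrite {1}phi_closureC; apply: closureS; rewrite -open_subsetE.
  exact: setC_phi_compl_sub.
exact: closed_openC (closed_phi _).
Qed.

Lemma phi_compl a : phi (~` a)%O = closure (~` phi a).
Proof. by rewrite phi_closureC complK. Qed.

Lemma subset_phi a b : phi a `<=` phi b <-> (a <= b)%O.
Proof.
split=> [ab|]; last exact: phi_mono.
rewrite -[b]complK -disj_leC; apply: contrapT => /negP /setC_phi_compl_neq0 [y].
rewrite complI complK phi_join setCU => -[nay nby].
by apply: nby; apply: ab; exact: setC_phi_compl_sub nay.
Qed.

Lemma phi_inj : injective (fun a => phi a).
Proof.
move=> a b eab; apply/eqP; rewrite eq_le.
by apply/andP; split; apply/subset_phi; rewrite eab.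
Qed.

Lemma phi_surj (F : set Y) : regular_closed F -> exists a, phi a = F.
Proof.
move=> F_rc.
have oS := open_preimage oZ p_perfect (@open_interior _ F).
have [s cl_s] := closure_open_epsA A_complete oS.
exists s; apply/seteqP; split.
  move=> _ [z [sz Zz] <-]; rewrite -F_rc.
  have z_cl : closure (Z `&` p @^-1` F°) z by rewrite cl_s.
  have pS_F : p @` (Z `&` p @^-1` F°) `<=` F° by move=> _ [x [_ Fx] <-].
  exact: closureS pS_F _ (closure_image_in oZ p_perfect Zz z_cl).
rewrite -F_rc; apply: subset_trans (closed_phi s); apply: closureS => y Fy.
have [z Zz zy] := fibre_neq0 p_onto y; exists z => //; split => //.
by rewrite -cl_s; apply: subset_closure; split => //; rewrite /preimage /= zy.
Qed.

Lemma phi_meet a b : phi (a `&` b)%O = rc_meet (phi a) (phi b).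
Proof.
have [c phic] := phi_surj (closure (phi a `&` phi b)°) (closure_interior_idem _).
rewrite /rc_meet -phic; suff -> : (a `&` b)%O = c by [].
apply: le_anti; apply/andP; split.
  apply/subset_phi; rewrite -(regular_closed_phi (a `&` b)%O) phic.
  apply/closureS/interiorS => y aby.
  by split; [exact: (phi_mono (leIl _ _) _ aby) | exact: (phi_mono (leIr _ _) _ aby)].
rewrite lexI; apply/andP; split; apply/subset_phi; rewrite phic;
  apply: subset_trans (closed_phi _); apply: closureS => y /interior_subset [] //.
Qed.

Lemma compact_phi a : compact (phi a) <-> compact (epsA a `&` Z).
Proof.
split => [/(compact_preimage p_perfect) cK | ca].
  have -> : epsA a `&` Z = Z `&` p @^-1` (phi a) `&` epsA a.
    apply/seteqP; split => [z [az Zz] | z [[Zz _] az]] //.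
    by split => //; split => //; exists z.
  exact: compact_closedI cK (closed_epsA a).
apply: continuous_compact ca; apply: (@continuous_subspaceW _ _ _ Z).
  by move=> z [].
by case: p_perfect.
Qed.

Lemma epsA_between_compact_preimage {K : set (ult A)} {O : set Y} :
  compact K -> open O -> K `<=` Z `&` p @^-1` O ->
  exists b, [/\ epsA b `<=` Z, K `<=` epsA b & phi b `<=` O].
Proof.
move=> cK oO KO.
have oV := open_preimage oZ p_perfect oO.
have [b [Kb bO]] := epsA_between_compact_open cK oV KO.
exists b; split => //; first by move=> z /bO [].
by move=> _ [z [/bO [_ Oz] _] <-].
Qed.

Local Notation Cp := (fun a b : A => phi a `&` phi b !=set0).
Local Notation Bp := [set a : A | compact (epsA a `&` Z)].

Let BpE a : Bp a <-> epsA a `<=` Z := compact_epsAI_dense Z_dense.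

Lemma contact_Cp : contact Cp.
Proof.
split.
- by move=> a /setC_phi_compl_neq0 [y /setC_phi_compl_sub ay]; exists y.
- move=> a b [y [ya yb]]; split; [apply: contraPneq ya | apply: contraPneq yb];
  by move=> ->; rewrite phi0.
- by move=> a b; rewrite setIC.
- move=> a b c; rewrite phi_join setIUr; split.
    by case=> y [?|?]; [left | right]; exists y.
  by case=> -[y ?]; exists y; [left | right].
Qed.

Lemma ideal_Bp : ideal Bp.
Proof.
split => /=.
- by rewrite epsA0 set0I; exact: compact0.
- move=> a b /BpE bZ /subset_epsA ab; apply/BpE.
  exact: subset_trans bZ.
- move=> a b /BpE aZ /BpE bZ; apply/BpE.
  by rewrite epsA_join => z [/aZ | /bZ].
Qed.

Lemma BC1_p a c : Bp a -> ll Cp a c -> exists2 b, Bp b & ll Cp a b /\ ll Cp b c.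
Proof.
move=> /compact_phi /(compact_preimage p_perfect) cK ac.
have oC := closed_openC (closed_phi (~` c)%O).
have [|b [bZ Kb bc]] := epsA_between_compact_preimage cK oC.
  by move=> z [Zz az]; split => // acz; apply: ac; exists (p z).
exists b; first exact/BpE.
split=> [[_ [[z [az Zz] <-] [z' [bz' Zz'] zz']]] | [y [/bc cy ay]]] //.
have /Kb : (Z `&` p @^-1` phi a) z' by split => //; rewrite /preimage /= zz'; exists z.
by rewrite epsA_compl in bz'.
Qed.

Lemma BC2_p a b : Cp a b -> exists2 c, Bp c & Cp a (c `&` b)%O.
Proof.
move=> [y [ay [z [bz Zz] zy]]].
have cF := compact_fibre p_perfect y.
have [|c [cZ yc _]] := epsA_between_compact_preimage cF (@openT _).
  by move=> x [Zx _].
exists c; first exact/BpE.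
exists y; split => //; exists z => //; split => //; rewrite epsA_meet; split => //.
by apply: yc; split => //; rewrite /preimage /= zy.
Qed.

Lemma BC3_p a : a != \bot%O -> exists2 b, Bp b & b != \bot%O /\ ll Cp b a.
Proof.
move=> /setC_phi_compl_neq0 [y ay].
have cF := compact_fibre p_perfect y.
have oC := closed_openC (closed_phi (~` a)%O).
have [|b [bZ yb ba]] := epsA_between_compact_preimage cF oC.
  by move=> z [Zz zy]; split => //; rewrite /preimage /= zy.
exists b; first exact/BpE.
split; last by move=> [y' [/ba]].
have [z Zz zy] := fibre_neq0 p_onto y.
by apply: contraPneq (yb z (conj Zz zy)) => ->; rewrite epsA0.
Qed.

Lemma local_contact_algebra_p : local_contact_algebra Cp Bp.
Proof.
split; [exact: contact_Cp | exact: ideal_Bp | exact: BC1_p | exact: BC2_p |].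
exact: BC3_p.
Qed.

Lemma CLCA_iso_RC_p : CLCA_iso_RC Cp Bp (fun a => phi a).
Proof.
split.
- by split; [exact: regular_closed_phi | exact: phi_inj | exact: phi_surj].
- split; [exact: phi0 | exact: phi1 | exact: phi_join | exact: phi_meet |].
  exact: phi_compl.
- by [].
- apply/seteqP; split=> [_ [a Ba <-] | F [F_rc cF]].
    by split; [exact: regular_closed_phi | exact/compact_phi].
  have [a phia] := phi_surj F F_rc.
  by exists a => //=; apply/compact_phi; rewrite phia.
Qed.

End RegularClosedImages.

Theorem proposition3p10 (d : Order.disp_t) (A : ctbDistrLatticeType d)
  (Y : topologicalType) (Z : set (ult A)) (p : ult A -> Y) :
  complete_BA A ->
  open Z -> closure Z = setT ->
  hausdorff_space Y -> locally_compact [set: Y] ->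
  perfect_on Z p -> irreducible_on Z p -> p @` Z = setT ->
  let Cp := fun a b : A =>
    p @` (epsA a `&` Z) `&` p @` (epsA b `&` Z) !=set0 in
  let Bp := [set a : A | compact (epsA a `&` Z)] in
  let phi := fun a : A => p @` (epsA a `&` Z) in
  [/\ complete_local_contact_algebra Cp Bp,
      CLCA_iso_RC Cp Bp phi &
      Bp = [set a : A | epsA a `<=` Z]].
Proof.
move=> A_complete oZ Z_dense _ _ p_perfect p_irreducible p_onto Cp Bp phi.
split.
- by split; last exact: local_contact_algebra_p.
- exact: CLCA_iso_RC_p.
- by apply/seteqP; split=> a /(compact_epsAI_dense Z_dense).
Qed.
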